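(* For every $n\ge 1$, $|\mathcal{ORCT}_n|=(n+1)2^{n-1}-n$.
   Context: $X_n=\{1,2,\dots,n\}$ with its usual order. A map $\alpha:X_n\to X_n$ is order-preserving if $x\le y$ implies $x\alpha\le y\alpha$, order-reversing if $x\le y$ implies $x\alpha\ge y\alpha$, and a contraction if $|x\alpha-y\alpha|\le|x-y|$ for all $x,y$. $\mathcal{ORCT}_n$ is the set of all maps $X_n\to X_n$ (defined on all of $X_n$) that are contractions and are either order-preserving or order-reversing. *)

(* X_n = {1..n} is modelled by 'I_n = {0..n-1} (an order- and
   distance-preserving relabelling i |-> i-1). *)
From mathcomp Require Import all_boot all_order.
Set Implicit Arguments. Unset Strict Implicit. Unset Printing Implicit Defensive.

Definition dist (a b : nat) : nat := (a - b) + (b - a).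

Definition order_preserving n (f : {ffun 'I_n -> 'I_n}) : bool :=
  [forall x : 'I_n, forall y : 'I_n, (x <= y)%N ==> (f x <= f y)%N].

Definition order_reversing n (f : {ffun 'I_n -> 'I_n}) : bool :=
  [forall x : 'I_n, forall y : 'I_n, (x <= y)%N ==> (f y <= f x)%N].

Definition contraction n (f : {ffun 'I_n -> 'I_n}) : bool :=
  [forall x : 'I_n, forall y : 'I_n, (dist (f x) (f y) <= dist x y)%N].

Definition ORCT n : {set {ffun 'I_n -> 'I_n}} :=
  [set f | contraction f && (order_preserving f || order_reversing f)].

From mathcomp Require Import all_boot all_order.
From mathcomp Require Import zify.
Set Implicit Arguments. Unset Strict Implicit. Unset Printing Implicit Defensive.

(* Write n = m + 1, so the maps act on 'I_m.+1.  An order-preserving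
   contraction f moves by 0 or 1 between consecutive points, so it is encoded
   by its code (f 0, t), where t_j = [f (j+1) != f j] is its step sequence;
   conversely a pair (a, t) decodes to such a map (x |-> a + number of ones
   among the first x steps) exactly when a + #ones(t) <= m.  Hence
     #OP = #{(a, t) | a + #ones(t) <= m} = sum_t (m + 1 - #ones(t)),
   and pairing t with its complement gives 2 #OP = (m + 2) 2^m.
   Composing with the reflection y |-> m - y exchanges order-preserving and
   order-reversing contractions, so #OR = #OP; a map that both preserves and
   reverses the order is constant, so OP and OR share exactly m + 1 maps.
   By inclusion-exclusion #ORCT = 2 #OP - (m + 1) = (m + 2) 2^m - (m + 1). *)

Definition ones_before (s : seq bool) (j : nat) : nat := count id (take j s).

Lemma ones_before_mono s x y : x <= y ->
  ones_before s x <= ones_before s y <= ones_before s x + (y - x).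
Proof.
move=> le_xy; rewrite /ones_before -(subnKC le_xy) takeD count_cat.
have := count_size id (take (y - x) (drop x s)); rewrite size_take.
case: ltnP => size_cmp; lia.
Qed.

Lemma ones_before_le_count s j : ones_before s j <= count id s.
Proof. by rewrite /ones_before -{2}(cat_take_drop j s) count_cat leq_addr. Qed.

Lemma ones_before_succ s j : j < size s ->
  ones_before s j.+1 = ones_before s j + nth false s j.
Proof. by move=> lt_js; rewrite /ones_before (take_nth false lt_js) -cats1 count_cat /= addn0. Qed.

Section OrderPreserving.
Variable m : nat.
Implicit Types (f : {ffun 'I_m.+1 -> 'I_m.+1}) (p : 'I_m.+1 * m.-tuple bool).

Definition OP : {set {ffun 'I_m.+1 -> 'I_m.+1}} :=
  [set f | contraction f && order_preserving f].
Definition OR : {set {ffun 'I_m.+1 -> 'I_m.+1}} :=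
  [set f | contraction f && order_reversing f].

Definition codes : {set 'I_m.+1 * m.-tuple bool} :=
  [set p : 'I_m.+1 * m.-tuple bool | p.1 + count id p.2 <= m].

Definition decode p : {ffun 'I_m.+1 -> 'I_m.+1} :=
  [ffun x : 'I_m.+1 => inord (p.1 + ones_before p.2 x)].

Lemma steps_size f : size (mkseq (fun j => f (inord j.+1) != f (inord j)) m) == m.
Proof. by rewrite size_mkseq. Qed.

Definition steps f : m.-tuple bool := Tuple (steps_size f).

Lemma nth_steps f j : j < m ->
  nth false (steps f) j = (f (inord j.+1) != f (inord j)).
Proof. by move=> lt_jm; rewrite /= nth_mkseq. Qed.

(* For an admissible code the value never leaves the range, so [inord] is
   harmless. *)
Lemma decodeE p x : p \in codes -> (decode p x : nat) = p.1 + ones_before p.2 x.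
Proof.
rewrite inE => p_code; rewrite ffunE inordK //.
by rewrite ltnS (leq_trans _ p_code) // leq_add2l ones_before_le_count.
Qed.

Lemma decode_OP p : p \in codes -> decode p \in OP.
Proof.
move=> p_code; rewrite inE; apply/andP; split.
  apply/forallP => x; apply/forallP => y; rewrite !decodeE // /dist.
  by case: (leqP x y) => [/(ones_before_mono p.2) | /ltnW/(ones_before_mono p.2)]; lia.
apply/forallP => x; apply/forallP => y; apply/implyP => /(ones_before_mono p.2).
by rewrite !decodeE //; lia.
Qed.

Lemma OP_step f j : f \in OP -> j < m ->
  (f (inord j.+1) : nat) = f (inord j) + (f (inord j.+1) != f (inord j)).
Proof.
rewrite inE => /andP[/forallP contr /forallP mono] lt_jm.
have /forallP/(_ (inord j.+1)) := contr (inord j).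
have /forallP/(_ (inord j.+1))/implyP := mono (inord j).
rewrite /dist !inordK //; last lia.
move=> /(_ (leqnSn j)); rewrite -val_eqE /=.
by case: eqP => step; lia.
Qed.

Lemma OP_value f j : f \in OP -> j <= m ->
  (f (inord j) : nat) = f ord0 + ones_before (steps f) j.
Proof.
move=> f_OP; elim: j => [|j IH] le_jm.
  by rewrite /ones_before take0 addn0; congr (nat_of_ord (f _)); apply: val_inj; rewrite /= inordK.
rewrite ones_before_succ ?size_tuple // nth_steps // (OP_step f_OP le_jm).
by rewrite IH ?(ltnW le_jm) // addnA.
Qed.

(* The code of an order-preserving contraction is admissible: f m <= m. *)
Lemma OP_code f : f \in OP -> (f ord0, steps f) \in codes.
Proof.
move=> f_OP; rewrite inE /=.
have := OP_value f_OP (leqnn m).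
rewrite /ones_before take_oversize ?size_tuple // => <-.
by rewrite -ltnS.
Qed.

Lemma codeK f : f \in OP -> decode (f ord0, steps f) = f.
Proof.
move=> f_OP; apply/ffunP => x; apply: val_inj => /=.
rewrite decodeE ?OP_code //= -OP_value //; last by rewrite -ltnS.
by congr (nat_of_ord (f _)); apply: val_inj; rewrite /= inordK.
Qed.

Lemma decodeK p : p \in codes -> (decode p ord0, steps (decode p)) = p.
Proof.
case: p => a t p_code; congr pair.
  by apply: val_inj => /=; rewrite decodeE //= /ones_before take0 addn0.
apply: val_inj; apply: (@eq_from_nth _ false); first by rewrite !size_tuple.
move=> j; rewrite size_tuple => lt_jm.
rewrite nth_steps // -val_eqE /= !decodeE //= !inordK; try lia.
rewrite ones_before_succ ?size_tuple // eqn_add2l.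
by case: (nth false t j); rewrite ?addn0 ?eqxx //; apply/negP => /eqP; lia.
Qed.

Lemma card_OP : #|OP| = #|codes|.
Proof.
have -> : OP = decode @: codes.
  apply/setP => f; apply/idP/imsetP => [f_OP | [p p_code ->]]; last exact: decode_OP.
  by exists (f ord0, steps f); rewrite ?OP_code ?codeK.
apply: card_in_imset => p q p_code q_code eq_pq.
by rewrite -(decodeK p_code) -(decodeK q_code) eq_pq.
Qed.

End OrderPreserving.

Lemma sum_ltn_indicator N K : \sum_(a < N) (a < K : nat) = minn N K.
Proof.
elim: N => [|N IH]; first by rewrite big_ord0 min0n.
by rewrite big_ord_recr /= IH; case: (ltnP N K) => N_cmp; lia.
Qed.

Definition compl_tuple m (t : m.-tuple bool) : m.-tuple bool := map_tuple negb t.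

Lemma compl_tupleK m : involutive (@compl_tuple m).
Proof. by move=> t; apply: val_inj; rewrite /= -map_comp map_id_in // => b _ /=; rewrite negbK. Qed.

Lemma count_compl_tuple m (t : m.-tuple bool) :
  count id (compl_tuple t) = m - count id t.
Proof.
rewrite /= count_map (@eq_count _ (preim negb id) (predC id)) //.
by have := count_predC id t; rewrite size_tuple; lia.
Qed.

Lemma count_tuple_le m (t : m.-tuple bool) : count id t <= m.
Proof. by rewrite -[leqRHS](size_tuple t) count_size. Qed.

Lemma card_codes_sum m : #|codes m| = \sum_(t : m.-tuple bool) (m.+1 - count id t).
Proof.
rewrite -sum1_card big_mkcond /=.
rewrite (_ : \sum_p _ = \sum_(a : 'I_m.+1) \sum_(t : m.-tuple bool)
           (if (a, t) \in codes m then 1 else 0)); last by rewrite pair_bigA; apply: eq_bigr => -[a t].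
rewrite exchange_big /=; apply: eq_bigr => t _.
have := count_tuple_le t.
transitivity (minn m.+1 (m.+1 - count id t)); last by lia.
rewrite -sum_ltn_indicator; apply: eq_bigr => a _; rewrite inE /=.
by case: ifP => in_range; case: ltnP => a_cmp /=; lia.
Qed.

(* Pairing each step sequence with its complement. *)
Lemma card_codes m : 2 * #|codes m| = (m + 2) * 2 ^ m.
Proof.
rewrite card_codes_sum mul2n -addnn.
rewrite {2}(reindex_inj (can_inj (@compl_tupleK m))) -big_split /=.
rewrite (eq_bigr (fun _ => m + 2)) => [|t _]; last first.
  by rewrite count_compl_tuple; have := count_tuple_le t; lia.
by rewrite sum_nat_const card_tuple card_bool mulnC.
Qed.

Definition mirror m (f : {ffun 'I_m.+1 -> 'I_m.+1}) : {ffun 'I_m.+1 -> 'I_m.+1} :=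
  [ffun x => rev_ord (f x)].

Lemma mirrorK m : involutive (@mirror m).
Proof. by move=> f; apply/ffunP => x; rewrite !ffunE rev_ordK. Qed.

Lemma contraction_mirror m (f : {ffun 'I_m.+1 -> 'I_m.+1}) :
  contraction (mirror f) = contraction f.
Proof.
apply: eq_forallb => x; apply: eq_forallb => y; rewrite !ffunE /= /dist.
have := ltn_ord (f x); have := ltn_ord (f y) => fy_lt fx_lt.
by congr (_ <= _); lia.
Qed.

Lemma reversing_mirror m (f : {ffun 'I_m.+1 -> 'I_m.+1}) :
  order_reversing (mirror f) = order_preserving f.
Proof.
apply: eq_forallb => x; apply: eq_forallb => y; rewrite !ffunE /=.
have := ltn_ord (f x); have := ltn_ord (f y) => fy_lt fx_lt.
by congr (_ ==> _); apply/idP/idP; lia.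
Qed.

Lemma preserving_mirror m (f : {ffun 'I_m.+1 -> 'I_m.+1}) :
  order_preserving (mirror f) = order_reversing f.
Proof. by rewrite -{2}(mirrorK f) reversing_mirror. Qed.

Lemma card_OR m : #|OR m| = #|OP m|.
Proof.
have -> : OR m = @mirror m @: OP m.
  apply/setP => f; apply/idP/imsetP => [f_OR | [g g_OP ->]].
    exists (mirror f); last by rewrite mirrorK.
    by move: f_OR; rewrite !inE contraction_mirror preserving_mirror.
  by move: g_OP; rewrite !inE contraction_mirror reversing_mirror.
exact/card_imset/can_inj/mirrorK.
Qed.

Definition const_maps m : {set {ffun 'I_m.+1 -> 'I_m.+1}} :=
  [set [ffun=> y] | y : 'I_m.+1].

Lemma card_const_maps m : #|const_maps m| = m.+1.
Proof.
rewrite card_imset ?card_ord // => y z /ffunP/(_ ord0).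
by rewrite !ffunE.
Qed.

Lemma OP_OR_const m : OP m :&: OR m = const_maps m.
Proof.
apply/setP => f; rewrite !inE; apply/idP/imsetP => [|[y _ ->]].
  move=> /andP[/andP[_ /forallP/(_ ord0)/forallP mono] /andP[_ /forallP/(_ ord0)/forallP anti]].
  exists (f ord0) => //; apply/ffunP => x; rewrite ffunE; apply/val_inj/eqP.
  by rewrite /= eqn_leq (implyP (mono x)) ?(implyP (anti x)).
have const_contr : contraction [ffun=> y].
  by apply/forallP => x; apply/forallP => z; rewrite !ffunE /dist subnn.
by rewrite const_contr; apply/andP; split; apply/forallP => x; apply/forallP => z;
  rewrite !ffunE leqnn implybT.
Qed.

Theorem corollary3p6 (n : nat) : (1 <= n)%N ->
  #|ORCT n| = ((n + 1) * 2 ^ (n - 1) - n)%N.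
Proof.
case: n => [//|m] _.
have -> : ORCT m.+1 = OP m :|: OR m by apply/setP => f; rewrite !inE andb_orr.
rewrite cardsU OP_OR_const card_const_maps card_OR card_OP subSS subn0.
have := card_codes m; lia.
Qed.
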